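(* (Poisson case as $\alpha\to0$.) Let $\gamma>0$, $\boldsymbol{z}\in\mathbb{N}^n$ and $\boldsymbol{y}=\gamma\boldsymbol{z}$. For $\alpha\in(0,1)$ let $\boldsymbol{\omega}=(\omega_1,\dots,\omega_n)$ have independent coordinates $\omega_i\sim\mathrm{Bin}(z_i,\alpha)$, and set $\boldsymbol{y}_1=\frac{\boldsymbol{y}-\gamma\boldsymbol{\omega}}{1-\alpha}$ and $\boldsymbol{y}_2=\frac1\alpha\boldsymbol{y}-\frac{1-\alpha}\alpha\boldsymbol{y}_1=\gamma\boldsymbol{\omega}/\alpha$. Let $f:\mathbb{R}^n\to\mathbb{R}^n$ be continuous. Then $$\lim_{\alpha\to0}\Big(\mathbb{E}_{\boldsymbol{\omega}}\|f(\boldsymbol{y}_1)-\boldsymbol{y}_2\|_2^2-\mathbb{E}_{\boldsymbol{\omega}}\|\boldsymbol{y}_2-\boldsymbol{y}\|_2^2\Big)=\|f(\boldsymbol{y})-\boldsymbol{y}\|_2^2+2\sum_{i=1}^n y_i\big(f_i(\boldsymbol{y})-f_i(\boldsymbol{y}-\gamma\boldsymbol{e}_i)\big),$$ where $\boldsymbol{e}_i$ is the $i$-th canonical basis vector of $\mathbb{R}^n$.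
   Context: This is the GR2R re-corruption for the scaled Poisson model $\boldsymbol{y}=\gamma\boldsymbol{z}$, $\boldsymbol{z}\sim\mathcal{P}(\boldsymbol{x}/\gamma)$ (independent Poisson coordinates). The subtracted term $\mathbb{E}_{\boldsymbol{\omega}}\|\boldsymbol{y}_2-\boldsymbol{y}\|_2^2$ does not depend on $f$. *)

From HB Require Import structures.
From mathcomp Require Import all_boot all_order all_algebra.
From mathcomp Require Import all_classical all_reals all_analysis.
Set Implicit Arguments. Unset Strict Implicit. Unset Printing Implicit Defensive.
Import Order.TTheory GRing.Theory Num.Theory numFieldNormedType.Exports.
Local Open Scope ring_scope.

(* Binomial pmf Bin(m, a) at k : 'C(m,k) a^k (1-a)^(m-k)  (= 0 for k > m). *)
Definition binom_pmf (R : realType) (m : nat) (a : R) (k : nat) : R :=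
  ('C(m, k))%:R * a ^+ k * (1 - a) ^+ (m - k).

(* Expectation of F(omega) when omega has independent coordinates
   omega_i ~ Bin(z_i, a).  omega ranges over all vectors with entries in
   {0, ..., max_i z_i}; the product pmf vanishes unless omega_i <= z_i. *)
Definition E_omega (R : realType) (n : nat) (z : 'I_n -> nat) (a : R)
  (F : ('I_n -> nat) -> R) : R :=
  \sum_(w : {ffun 'I_n -> 'I_((\max_(i < n) z i).+1)})
     (\prod_(i < n) binom_pmf (z i) a (w i)) * F (fun i => nat_of_ord (w i)).

Definition sqnorm (R : realType) (n : nat) (v : 'rV[R]_n) : R :=
  \sum_(i < n) (v 0 i) ^+ 2.

Definition yvec (R : realType) (n : nat) (gamma : R) (z : 'I_n -> nat) : 'rV[R]_n :=
  \row_i (gamma * (z i)%:R).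

Definition y1vec (R : realType) (n : nat) (gamma a : R) (z w : 'I_n -> nat) : 'rV[R]_n :=
  (1 - a)^-1 *: (yvec gamma z - yvec gamma w).

Definition y2vec (R : realType) (n : nat) (gamma a : R) (z w : 'I_n -> nat) : 'rV[R]_n :=
  a^-1 *: yvec gamma z - ((1 - a) / a) *: y1vec gamma a z w.

From mathcomp Require Import all_boot all_order all_algebra.
From mathcomp Require Import all_classical all_reals all_analysis.
From mathcomp Require Import ring.
Set Implicit Arguments. Unset Strict Implicit. Unset Printing Implicit Defensive.
Import Order.TTheory GRing.Theory Num.Theory numFieldNormedType.Exports.
Local Open Scope classical_set_scope.
Local Open Scope ring_scope.

(* For 0 < a < 1 we have y2 = gamma omega / a, and the 1/a cancels against the
   binomial weights: P_a(omega) omega_i / a is again a polynomial in a.  Hence the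
   difference of the two expectations is a finite sum of terms continuous at
   a = 0.  At a = 0 the law of omega is the point mass at 0, and
   P_a(omega) omega_i / a becomes z_i times the point mass at e_i, which yields
   the right-hand side. *)

Section BinomialWeights.
Variable R : realType.

Lemma continuous_bernstein (c : R) i j :
  continuous (fun a : R => c * a ^+ i * (1 - a) ^+ j).
Proof.
have -> : (fun a : R => c * a ^+ i * (1 - a) ^+ j)
          = horner (c%:P * 'X^i * (1 - 'X) ^+ j).
  by apply: funext => a; rewrite !hornerE.
exact: continuous_horner.
Qed.

(* [k / a * binom_pmf m a k], written without the division. *)
Definition binom_pmfk (m : nat) (a : R) (k : nat) : R :=
  ('C(m, k) * k)%:R * a ^+ k.-1 * (1 - a) ^+ (m - k).

Lemma binom_pmf_mulk m a k : binom_pmf m a k * k%:R = a * binom_pmfk m a k.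
Proof.
rewrite /binom_pmf /binom_pmfk natrM.
case: k => [|k] /=; first by rewrite !(mulr0, mul0r).
by rewrite exprS; ring.
Qed.

Lemma binom_pmf0 m k : binom_pmf m (0 : R) k = (k == 0)%:R.
Proof.
rewrite /binom_pmf expr0n subr0 expr1n mulr1.
by case: k => [|k] /=; rewrite ?bin0 ?mulr0 ?mulr1.
Qed.

Lemma binom_pmfk0 m k : binom_pmfk m (0 : R) k = m%:R * (k == 1)%:R.
Proof.
rewrite /binom_pmfk subr0 expr1n mulr1.
by case: k => [|[|k]]; rewrite ?bin1 ?muln1 ?expr0n ?mulr0 ?mulr1 ?muln0.
Qed.

End BinomialWeights.

Lemma sum_ffun_indicator (R : comRingType) (I : finType) (m : nat) (c : I -> nat)
    (h : (I -> nat) -> R) :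
  (forall i, c i <= m)%N ->
  \sum_(w : {ffun I -> 'I_m.+1}) (\prod_i ((w i : nat) == c i)%:R) * h (fun i => w i)
  = h c.
Proof.
move=> le_cm; pose wc : {ffun I -> 'I_m.+1} := [ffun i => inord (c i)].
have wcE i : (wc i : nat) = c i by rewrite ffunE inordK // ltnS.
rewrite (bigD1 wc) //= [X in _ + X]big1 => [|w w_neq].
  rewrite addr0 big1 => [|i _]; last by rewrite wcE eqxx.
  by rewrite mul1r; congr h; apply: funext => i; rewrite wcE.
have /existsP[i w_i] : [exists i, (w i : nat) != c i].
  apply: contraR w_neq => /existsPn w_c; apply/eqP/ffunP => i.
  by apply: val_inj; rewrite /= wcE; apply/eqP; move: (w_c i); rewrite negbK.
by rewrite (bigD1 i) //= (negbTE w_i) !mul0r.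
Qed.

Section ProductWeights.
Variables (R : realType) (n : nat) (z : 'I_n -> nat).

Definition pmf_omega (a : R) (w : 'I_n -> nat) : R :=
  \prod_(i < n) binom_pmf (z i) a (w i).

Definition pmfk_omega (a : R) (w : 'I_n -> nat) (i : 'I_n) : R :=
  \prod_(j < n) (if j == i then binom_pmfk (z j) a (w j) else binom_pmf (z j) a (w j)).

Lemma pmf_omega_mulk a w i : pmf_omega a w * (w i)%:R = a * pmfk_omega a w i.
Proof.
rewrite /pmf_omega /pmfk_omega (bigD1 i) //= [in RHS](bigD1 i) //= eqxx.
rewrite mulrAC binom_pmf_mulk -mulrA; congr (_ * (_ * _)).
by apply: eq_bigr => j /negbTE ->.
Qed.

Lemma continuous_pmf_omega w : continuous (fun a => pmf_omega a w).
Proof.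
apply: continuous_big => [|i _]; first exact: mul_continuous.
exact: continuous_bernstein.
Qed.

Lemma continuous_pmfk_omega w i : continuous (fun a => pmfk_omega a w i).
Proof.
apply: continuous_big => [|j _]; first exact: mul_continuous.
by case: (j == i); exact: continuous_bernstein.
Qed.

Lemma pmf_omega0 w : pmf_omega 0 w = \prod_i (w i == 0)%:R.
Proof. by apply: eq_bigr => i _; rewrite binom_pmf0. Qed.

Lemma pmfk_omega0 w i : pmfk_omega 0 w i = (z i)%:R * \prod_j (w j == (j == i))%:R.
Proof.
rewrite /pmfk_omega (bigD1 i) //= [in RHS](bigD1 i) //= eqxx binom_pmfk0 mulrA.
by congr (_ * _); apply: eq_bigr => j /negbTE ji; rewrite ji binom_pmf0.
Qed.

Local Notation W := {ffun 'I_n -> 'I_(\max_(i < n) z i).+1}.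

Lemma sum_pmf_omega0 (h : ('I_n -> nat) -> R) :
  \sum_(w : W) pmf_omega 0 (fun i => w i) * h (fun i => w i) = h (fun=> 0%N).
Proof.
under eq_bigr do rewrite pmf_omega0.
exact: (@sum_ffun_indicator R _ _ (fun=> 0%N) h).
Qed.

Lemma sum_pmfk_omega0 i (h : ('I_n -> nat) -> R) :
  \sum_(w : W) pmfk_omega 0 (fun j => w j) i * h (fun j => w j)
  = (z i)%:R * h (fun j => (j == i : nat)).
Proof.
under eq_bigr do rewrite pmfk_omega0 -mulrA.
rewrite -mulr_sumr; have [->|zi_gt0] := posnP (z i); first by rewrite !mul0r.
congr (_ * _); apply: (@sum_ffun_indicator R _ _ (fun j => (j == i : nat)) h) => j.
by case: (j == i); rewrite // (leq_trans zi_gt0) ?leq_bigmax.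
Qed.

End ProductWeights.

Lemma continuous_sqnorm (R : realType) (n : nat) : continuous (@sqnorm R n).
Proof.
apply: continuous_big => [|i _]; first exact: add_continuous.
move=> v; exact: (continuous_comp (@coord_continuous R 1 n 0 i v)
                                   (@exprn_continuous R 2 _)).
Qed.

Section RiskLimit.
Variables (R : realType) (n : nat) (gamma : R) (z : 'I_n -> nat)
  (f : 'rV[R]_n -> 'rV[R]_n).
Local Notation y := (yvec gamma z).

Lemma y2vecE a w : a != 0 -> a != 1 -> y2vec gamma a z w = a^-1 *: yvec gamma w.
Proof.
move=> a_neq0 a_neq1; have a1_neq0 : 1 - a != 0 by rewrite subr_eq0 eq_sym.
by apply/matrixP => ? j; rewrite !mxE; field; rewrite a_neq0 a1_neq0.
Qed.

Definition risk_term (a : R) (w : 'I_n -> nat) : R :=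
  pmf_omega z a w * (sqnorm (f (y1vec gamma a z w)) - sqnorm y)
  + 2 * \sum_(i < n) gamma * pmfk_omega z a w i * (y 0 i - f (y1vec gamma a z w) 0 i).

Lemma risk_termE a w : a != 0 -> a != 1 ->
  pmf_omega z a w * sqnorm (f (y1vec gamma a z w) - y2vec gamma a z w)
  - pmf_omega z a w * sqnorm (y2vec gamma a z w - y) = risk_term a w.
Proof.
move=> a_neq0 a_neq1; rewrite y2vecE // /risk_term.
rewrite /sqnorm -mulrBr -!sumrB !mulr_sumr -big_split /=; apply: eq_bigr => i _.
have -> : pmfk_omega z a w i = a^-1 * (pmf_omega z a w * (w i)%:R).
  by rewrite pmf_omega_mulk mulKf.
by rewrite !mxE; field.
Qed.

Local Notation W := {ffun 'I_n -> 'I_(\max_(i < n) z i).+1}.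

Lemma E_omega_diffE a : a != 0 -> a != 1 ->
  E_omega z a (fun w => sqnorm (f (y1vec gamma a z w) - y2vec gamma a z w))
  - E_omega z a (fun w => sqnorm (y2vec gamma a z w - y))
  = \sum_(w : W) risk_term a (fun i => w i).
Proof.
by move=> a_neq0 a_neq1; rewrite -sumrB; apply: eq_bigr => w _; exact: risk_termE.
Qed.

Lemma y1vec0 w : y1vec gamma 0 z w = y - yvec gamma w.
Proof. by rewrite /y1vec subr0 invr1 scale1r. Qed.

Lemma sum_risk_term0 :
  \sum_(w : W) risk_term 0 (fun i => w i) =
  sqnorm (f y - y)
  + 2 * \sum_(i < n) y 0 i * (f y 0 i - f (y - gamma *: delta_mx 0 i) 0 i).
Proof.
have y0 : yvec gamma ((fun=> 0%N) : 'I_n -> nat) = 0.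
  by apply/matrixP => ? ?; rewrite !mxE mulr0.
have y_delta i : yvec gamma (fun j => (j == i : nat)) = gamma *: delta_mx 0 i.
  by apply/matrixP => k j; rewrite !mxE [k]ord1 eqxx; case: (j == i); rewrite ?mulr1.
have term_i i : \sum_(w : W) gamma * pmfk_omega z 0 (fun j => w j) i
                   * (y 0 i - f (y1vec gamma 0 z (fun j => w j)) 0 i)
               = y 0 i * (y 0 i - f (y - gamma *: delta_mx 0 i) 0 i).
  under eq_bigr do rewrite [gamma * _]mulrC -mulrA.
  rewrite (sum_pmfk_omega0 z i (fun w => gamma * (y 0 i - f (y1vec gamma 0 z w) 0 i))).
  by rewrite y1vec0 y_delta [y 0 i]mxE; ring.
rewrite /risk_term big_split /=.
rewrite (sum_pmf_omega0 z (fun w => sqnorm (f (y1vec gamma 0 z w)) - sqnorm y)).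
rewrite y1vec0 y0 subr0 -mulr_sumr exchange_big /=.
under eq_bigr do rewrite term_i.
rewrite /sqnorm -sumrB !mulr_sumr -!big_split /=; apply: eq_bigr => i _.
by rewrite !mxE; ring.
Qed.

Hypothesis f_cont : continuous f.

Lemma continuous_at0_f_y1vec w : {for 0, continuous (fun a => f (y1vec gamma a z w))}.
Proof.
have y1_cont : {for 0, continuous (fun a : R => y1vec gamma a z w)}.
  apply: continuousZ; last exact: cvg_cst.
  apply: continuousV; first by rewrite subr0 oner_neq0.
  by apply: continuousB; [exact: cvg_cst | exact: cvg_id].
apply: (@cvg_comp _ _ _ (fun a => y1vec gamma a z w) f); first exact: y1_cont.
exact: f_cont.
Qed.

Lemma continuous_at0_risk_term w : {for 0, continuous (fun a => risk_term a w)}.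
Proof.
have fy1_cont := @continuous_at0_f_y1vec w.
apply: continuousD; apply: continuousM.
- exact: continuous_pmf_omega.
- apply: continuousB; last exact: cvg_cst.
  apply: (@cvg_comp _ _ _ _ (@sqnorm R n)); first exact: fy1_cont.
  exact: continuous_sqnorm.
- exact: cvg_cst.
apply: cvg_big => [|i _]; first exact: add_continuous.
apply: cvgM; first by apply: cvgM; [exact: cvg_cst | exact: continuous_pmfk_omega].
apply: cvgB; first exact: cvg_cst.
apply: (@cvg_comp _ _ _ _ (fun v : 'rV[R]_n => v 0 i)); first exact: fy1_cont.
exact: coord_continuous.
Qed.

Lemma cvg_E_omega_diff :
  (fun a : R =>
     E_omega z a (fun w => sqnorm (f (y1vec gamma a z w) - y2vec gamma a z w))
   - E_omega z a (fun w => sqnorm (y2vec gamma a z w - y)))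
  @ 0^'+ --> \sum_(w : W) risk_term 0 (fun i => w i).
Proof.
have risk_cont : {for 0, continuous (fun a => \sum_(w : W) risk_term a (fun i => w i))}.
  apply: cvg_big => [|w _]; first exact: add_continuous.
  exact: continuous_at0_risk_term.
apply: cvg_trans (cvg_at_right_filter risk_cont); apply: near_eq_cvg; near=> a.
rewrite E_omega_diffE // lt_eqF //; near: a; exact: nbhs_right_lt.
Unshelve. all: by end_near.
Qed.

End RiskLimit.

Theorem mainTheorem6 (R : realType) (n : nat) (gamma : R) (z : 'I_n -> nat)
  (f : 'rV[R]_n -> 'rV[R]_n) :
  0 < gamma -> continuous f ->
  (fun a : R =>
     E_omega z a (fun w => sqnorm (f (y1vec gamma a z w) - y2vec gamma a z w))
   - E_omega z a (fun w => sqnorm (y2vec gamma a z w - yvec gamma z)))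
  @ 0^'+ -->
  sqnorm (f (yvec gamma z) - yvec gamma z)
  + 2 * \sum_(i < n) yvec gamma z 0 i *
          (f (yvec gamma z) 0 i - f (yvec gamma z - gamma *: delta_mx 0 i) 0 i).
Proof. by move=> _ f_cont; rewrite -sum_risk_term0; exact: cvg_E_omega_diff. Qed.
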